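(* Consider the protocol \textsf{Sieve} (described in the context) run on top of an instance $pb$ of probabilistic broadcast. If $pb$ satisfies $\epsilon_t^{pb}$-totality, then \textsf{Sieve} satisfies $\epsilon_v$-total validity with $$\epsilon_v \le \epsilon_t^{pb} + \left(1-\epsilon_t^{pb}\right)\left(1-(1-\epsilon_o)^C\right),\qquad \epsilon_o=\sum_{\bar F=E-\hat E+1}^{E}\binom{E}{\bar F} f^{\bar F}(1-f)^{E-\bar F}.$$
   Context: System model: a fixed set $\Pi$ of $N$ processes, of which a fraction $f$ are Byzantine (arbitrary behaviour, controlled by a single colluding static adversary that also controls message scheduling) and $C=(1-f)N$ are correct; $\Pi_C$ denotes the set of correct processes. The system is asynchronous: any two processes are connected by reliable authenticated point-to-point links (every message between correct processes is eventually delivered, after an arbitrary finite delay). Signatures cannot be forged. Each correct process has a private, unbiased, independent source of randomness unknown to the adversary, and an oracle returning processes of $\Pi$ chosen uniformly at random. A designated sender $\sigma$ broadcasts a single message. Probabilistic broadcast ($pb$): sender $\sigma$ may broadcast a message; processes deliver at most one message (no duplication); if $\sigma$ is correct, any message delivered by a correct process was broadcast by $\sigma$ (integrity); a correct sender delivers the message it broadcasts (validity); $pb$ satisfies $\epsilon$-totality if, with probability at least $1-\epsilon$, whenever some correct process delivers a message, every correct process eventually delivers a message. \textsf{Sieve} (parameters: echo sample size $E$ and delivery threshold $\hat E$): upon initialization each correct process draws an echo sample $\mathcal{E}$ consisting of $E$ processes, each drawn independently and uniformly from $\Pi$ (with replacement), and sends an EchoSubscribe message to each of them; it records every process from which it receives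 EchoSubscribe in a subscription set. To broadcast $m$, $\sigma$ broadcasts $(m,\mathrm{sign}_\sigma(m))$ via $pb$. Upon $pb$-delivering a pair $(m,s)$ with $s$ a valid signature of $\sigma$ on $m$, a correct process sets $echo=(m,s)$ and sends an Echo$(m,s)$ message to every process in its subscription set (and, for any EchoSubscribe received later, replies with Echo$(m,s)$). A correct process records, for each process $\pi$ in its echo sample, the first Echo message with a valid signature received from $\pi$. A correct process that has not yet delivered delivers $m$ as soon as at least $\hat E$ members of its echo sample have sent it an Echo for the same pair as its own $echo$. $\epsilon$-total validity: if $\sigma$ is correct and broadcasts $m$, then with probability at least $1-\epsilon$ every correct process eventually delivers $m$. Probabilities are over the random choices of correct processes, for any adversary behaviour. *)

From HB Require Import structures.
From mathcomp Require Import all_boot all_order all_algebra.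
From mathcomp Require Import all_classical all_reals all_analysis.
Set Implicit Arguments. Unset Strict Implicit. Unset Printing Implicit Defensive.
Import Order.TTheory GRing.Theory Num.Theory.
Local Open Scope classical_set_scope.
Local Open Scope ring_scope.

(* Processes are 'I_N; Byz is the set of Byzantine processes.
   The echo samples of all processes: process p's sample is a vector of E
   independent uniform draws (with replacement) from 'I_N. *)
Definition sample_t (N E : nat) := {ffun 'I_N -> {ffun 'I_E -> 'I_N}}.

(* Eventual Sieve delivery of message m by correct process p, given:
   - pbd q : the message (signed pair) pb-delivered by q (None if never);
     every correct q that pb-delivers sets echo and sends Echo to all its
     subscribers (including later ones), so p receives it if q is in p's sample;
   - becho b p : whether Byzantine b eventually sends p an Echo for p's pair;
   - smp : p's echo sample.
   Members of the sample are counted by draw (position i : 'I_E). *)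
Definition sieve_delivers (N E Ehat : nat) (Msg : eqType) (Byz : {set 'I_N})
  (pbd : 'I_N -> option Msg) (becho : 'I_N -> 'I_N -> bool)
  (smp : {ffun 'I_E -> 'I_N}) (p : 'I_N) (m : Msg) : Prop :=
  pbd p = Some m /\
  (Ehat <= #|[set i : 'I_E | if smp i \in Byz then becho (smp i) p
                              else pbd (smp i) == Some m]|)%N.

(* pb with correct sender sigma broadcasting m: for every pb-adversary A and
   every outcome r of the correct processes' randomness, pbout A r p is the
   (unique, possibly absent) message eventually pb-delivered by p.
   Validity and integrity. *)
Definition pb_correct_sender (Omega Adv : Type) (N : nat) (Msg : Type)
  (Byz : {set 'I_N}) (pbout : Adv -> Omega -> 'I_N -> option Msg)
  (sigma : 'I_N) (m : Msg) : Prop :=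
  (forall A r, pbout A r sigma = Some m) /\
  (forall A r p x, p \notin Byz -> pbout A r p = Some x -> x = m).

Definition pb_totality (R : realType) (d : measure_display)
  (Omega : measurableType d) (P : probability Omega R) (Adv : Type) (N : nat)
  (Msg : Type) (Byz : {set 'I_N}) (pbout : Adv -> Omega -> 'I_N -> option Msg)
  (eps : R) : Prop :=
  forall A : Adv,
    ((1 - eps)%:E <=
     P [set r | (exists p, p \notin Byz /\ pbout A r p <> None) ->
                forall p, p \notin Byz -> pbout A r p <> None])%E.

Definition all_correct_deliver (Omega Adv : Type) (N E Ehat : nat)
  (Msg : eqType) (Byz : {set 'I_N}) (pbout : Adv -> Omega -> 'I_N -> option Msg)
  (A : Adv) (becho : Omega -> 'I_N -> 'I_N -> bool) (s : sample_t N E)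
  (m : Msg) : set Omega :=
  [set r | forall p, p \notin Byz ->
     sieve_delivers Ehat Byz (pbout A r) (becho r) (s p) p m].

(* Probability (over pb randomness and independent uniform samples) that
   every correct process delivers m, when the adversary picks its pb strategy
   strat s and the Byzantine echo behaviour becho s as functions of the samples. *)
Definition sieve_validity_prob (R : realType) (d : measure_display)
  (Omega : measurableType d) (P : probability Omega R) (Adv : Type)
  (N E Ehat : nat) (Msg : eqType) (Byz : {set 'I_N})
  (pbout : Adv -> Omega -> 'I_N -> option Msg)
  (strat : sample_t N E -> Adv)
  (becho : sample_t N E -> Omega -> 'I_N -> 'I_N -> bool) (m : Msg) : \bar R :=
  (\sum_(s : sample_t N E)
     ((#|{: sample_t N E}|%:R)^-1)%:E *
     P (all_correct_deliver Ehat Byz pbout (strat s) (becho s) s m))%E.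

Definition eps_o (R : realType) (N E Ehat : nat) (Byz : {set 'I_N}) : R :=
  let f : R := #|Byz|%:R / N%:R in
  \sum_((E.+1 - Ehat)%N <= F < E.+1) 'C(E, F)%:R * f ^+ F * (1 - f) ^+ (E - F).

Definition eps_v_bound (R : realType) (N E Ehat : nat) (Byz : {set 'I_N})
  (eps_t : R) : R :=
  let C := (N - #|Byz|)%N in
  eps_t + (1 - eps_t) * (1 - (1 - eps_o R E Ehat Byz) ^+ C).

From HB Require Import structures.
From mathcomp Require Import all_boot all_order all_algebra.
From mathcomp Require Import all_classical all_reals all_analysis.
From mathcomp Require Import ring zify.
Set Implicit Arguments. Unset Strict Implicit. Unset Printing Implicit Defensive.
Import Order.TTheory GRing.Theory Num.Theory.

(* Call an echo sample good if at least Ehat of its E draws are correct.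
   When every correct process has a good sample, the event that all correct
   processes Sieve-deliver m is exactly the totality event of pb: validity
   of the correct sender plus totality make every correct process
   pb-deliver, integrity makes each of them deliver m, and then at least
   Ehat echoes for m reach every correct process.  So this event has
   probability at least 1 - eps_t.  A uniform sample is bad exactly when
   more than E - Ehat of its draws are Byzantine, which happens for a
   fraction eps_o of the N^E samples, and the C correct samples are drawn
   independently, so a fraction (1 - eps_o)^C of sample vectors is good.
   Averaging over the sample vectors gives the bound. *)

Section PreimageCounting.
Variables (A T : finType).

Lemma card_ffun_family (F : A -> {set T}) :
  #|[set f : {ffun A -> T} | [forall i, f i \in F i]]| = \prod_i #|F i|.
Proof.
rewrite cardsE (eq_card (_ : _ =i family F)); last first.
  by move=> f; rewrite !inE; apply/forallP/familyP.
by rewrite card_family foldrE big_map big_enum.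
Qed.

Lemma card_ffun_preimset (B : {set T}) (S : {set A}) :
  #|[set v : {ffun A -> T} | [set i | v i \in B] == S]| =
  #|B| ^ #|S| * #|~: B| ^ #|~: S|.
Proof.
have -> : [set v : {ffun A -> T} | [set i | v i \in B] == S] =
    [set v : {ffun A -> T} | [forall i, v i \in if i \in S then B else ~: B]].
  apply/setP => v; rewrite !inE; apply/eqP/forallP => [<- i | vSB].
    by rewrite inE; case: ifP; rewrite ?inE => ->.
  apply/setP => i; rewrite inE; move: (vSB i).
  by case: ifP; rewrite ?inE => // _ /negbTE.
rewrite card_ffun_family (bigID (mem S)) /=.
rewrite (eq_bigr (fun _ => #|B|)) => [|i ->] //.
rewrite [X in _ * X](eq_bigr (fun _ => #|~: B|)) => [|i /negbTE ->] //.
by rewrite !prod_nat_const; congr (_ ^ _ * _ ^ _); apply: eq_card => i; rewrite !inE.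
Qed.

Lemma card_ffun_preimset_eq (B : {set T}) (k : nat) :
  #|[set v : {ffun A -> T} | #|[set i | v i \in B]| == k]| =
  'C(#|A|, k) * (#|B| ^ k * #|~: B| ^ (#|A| - k)).
Proof.
rewrite -sum1dep_card (partition_big
  (fun v : {ffun A -> T} => [set i | v i \in B]) (fun S => #|S| == k)) //=.
rewrite (eq_bigr (fun _ => #|B| ^ k * #|~: B| ^ (#|A| - k))) => [|S /eqP cardS].
  by rewrite sum_nat_cond_const card_draws.
rewrite (eq_bigl (fun v : {ffun A -> T} => [set i | v i \in B] == S)); last first.
  by move=> v; rewrite andb_idl // => /eqP ->; rewrite cardS.
by rewrite sum1dep_card card_ffun_preimset -(cardsC S) cardS addKn.
Qed.

Lemma card_ffun_preimset_ge (B : {set T}) (K : nat) :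
  #|[set v : {ffun A -> T} | K <= #|[set i | v i \in B]|]| =
  \sum_(K <= k < #|A|.+1) 'C(#|A|, k) * (#|B| ^ k * #|~: B| ^ (#|A| - k)).
Proof.
have card_lt (S : {set A}) : #|S| < #|A|.+1 by rewrite ltnS max_card.
rewrite -sum1dep_card (partition_big (fun v : {ffun A -> T} =>
  inord #|[set i | v i \in B]| : 'I_#|A|.+1) (fun k => K <= k)) /=; last first.
  by move=> v; rewrite inordK.
rewrite big_geq_mkord; apply: eq_bigr => k Kk.
rewrite -card_ffun_preimset_eq -sum1dep_card; apply: eq_bigl => v.
by rewrite -(inj_eq val_inj) /= inordK //; apply: andb_idl => /eqP ->.
Qed.

End PreimageCounting.

Lemma card_ffun_in_outside (A T : finType) (D : {set A}) (G : {set T}) :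
  #|[set s : {ffun A -> T} | [forall p, (p \notin D) ==> (s p \in G)]]| =
  (#|G| ^ #|~: D| * #|T| ^ #|D|)%N.
Proof.
have -> : [set s : {ffun A -> T} | [forall p, (p \notin D) ==> (s p \in G)]] =
    [set s : {ffun A -> T} | [forall p, s p \in if p \in D then [set: T] else G]].
  apply/setP => s; rewrite !inE; apply: eq_forallb => p.
  by case: (p \in D); rewrite ?inE.
rewrite card_ffun_family (bigID (mem D)) /= mulnC.
rewrite (eq_bigr (fun _ => #|G|)) => [|p /negbTE ->] //.
rewrite [X in _ * X](eq_bigr (fun _ => #|T|)) => [|p ->]; last by rewrite cardsT.
by rewrite !prod_nat_const; congr (_ ^ _ * _ ^ _); apply: eq_card => p; rewrite !inE.
Qed.

Local Open Scope ring_scope.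

Lemma ratio_ffun_in_outside (R : numFieldType) (A T : finType) (D : {set A})
    (G : {set T}) : (0 < #|T|)%N ->
  #|[set s : {ffun A -> T} | [forall p, (p \notin D) ==> (s p \in G)]]|%:R
    / #|{ffun A -> T}|%:R = (#|G|%:R / #|T|%:R : R) ^+ #|~: D|.
Proof.
move=> T_gt0; have T_neq0 : #|T|%:R != 0 :> R by rewrite pnatr_eq0 -lt0n.
rewrite card_ffun_in_outside card_ffun -(cardsC D) !natrM !natrX exprD expr_div_n.
by field; rewrite ?expf_neq0.
Qed.

Lemma uniform_mean_ge_ratio (R : realType) (I : finType) (G : {set I}) (c : R)
    (f : I -> \bar R) :
  (forall i, 0 <= f i)%E -> (forall i, i \in G -> c%:E <= f i)%E ->
  ((c * (#|G|%:R / #|I|%:R))%:E <= \sum_i ((#|I|%:R)^-1)%:E * f i)%E.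
Proof.
move=> f_ge0 Gf; have w_ge0 : 0 <= (#|I|%:R : R)^-1 by rewrite invr_ge0.
have [c_lt0 | c_ge0] := ltrP c 0.
  apply: (@le_trans _ _ 0%E); last by apply: sume_ge0 => i _; rewrite mule_ge0.
  by rewrite lee_fin nmulr_rle0 // divr_ge0.
apply: (@le_trans _ _ (\sum_i ((#|I|%:R)^-1 * (if i \in G then c else 0))%:E)%E).
  rewrite sumEFin lee_fin -mulr_sumr -big_mkcond sumr_const.
  by rewrite -[c *+ _]mulr_natr mulrA mulrC.
apply: lee_sum => i _; rewrite EFinM lee_wpmul2l ?lee_fin //.
by case: ifP => [/Gf|_].
Qed.

Section EchoSamples.
Variables (N E Ehat : nat) (Byz : {set 'I_N}).

Definition good_samples : {set {ffun 'I_E -> 'I_N}} :=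
  [set v : {ffun 'I_E -> 'I_N} | (Ehat <= #|[set i | v i \notin Byz]|)%N].

Lemma setC_good_samples :
  ~: good_samples =
  [set v : {ffun 'I_E -> 'I_N} | (E.+1 - Ehat <= #|[set i | v i \in Byz]|)%N].
Proof.
apply/setP => v; rewrite !inE -ltnNge.
have := cardsC [set i | v i \in Byz]; rewrite card_ord.
have -> : ~: [set i | v i \in Byz] = [set i | v i \notin Byz].
  by apply/setP => i; rewrite !inE.
by move: #|_| #|_| => x y; lia.
Qed.

Variable R : realType.
Hypothesis N_gt0 : (0 < N)%N.

Lemma eps_oE : eps_o R E Ehat Byz =
  #|~: good_samples|%:R / #|{ffun 'I_E -> 'I_N}|%:R.
Proof.
have N_neq0 : N%:R != 0 :> R by rewrite pnatr_eq0 -lt0n.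
have one_sub_f : 1 - #|Byz|%:R / N%:R = #|~: Byz|%:R / N%:R :> R.
  have cardC : #|~: Byz|%:R = N%:R - #|Byz|%:R :> R.
    by apply/eqP; rewrite eq_sym subr_eq -natrD addnC cardsC card_ord.
  by rewrite cardC; field.
rewrite setC_good_samples card_ffun_preimset_ge card_ffun !card_ord /eps_o.
rewrite natr_sum mulr_suml; apply: eq_big_nat => F /andP[_ FE].
rewrite one_sub_f !expr_div_n !natrM !natrX -(subnKC (_ : F <= E)%N) ?addKn //.
by rewrite exprD; field; rewrite ?expf_neq0.
Qed.

Lemma one_sub_eps_oE : 1 - eps_o R E Ehat Byz =
  #|good_samples|%:R / #|{ffun 'I_E -> 'I_N}|%:R.
Proof.
have card_gt0 : #|{ffun 'I_E -> 'I_N}|%:R != 0 :> R.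
  by rewrite pnatr_eq0 card_ffun !card_ord -lt0n expn_gt0 N_gt0.
by rewrite eps_oE -(cardsC good_samples) natrD in card_gt0 *; field.
Qed.

End EchoSamples.

Local Open Scope classical_set_scope.

Lemma all_correct_deliver_totality (Omega Adv : Type) (N E Ehat : nat)
    (Msg : eqType) (Byz : {set 'I_N}) (pbout : Adv -> Omega -> 'I_N -> option Msg)
    (sigma : 'I_N) (m : Msg) (A : Adv) (becho : Omega -> 'I_N -> 'I_N -> bool)
    (s : sample_t N E) :
  sigma \notin Byz -> pb_correct_sender Byz pbout sigma m ->
  (forall p, p \notin Byz -> s p \in good_samples E Ehat Byz) ->
  all_correct_deliver Ehat Byz pbout A becho s m =
  [set r | (exists p, p \notin Byz /\ pbout A r p <> None) ->
           forall p, p \notin Byz -> pbout A r p <> None].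
Proof.
move=> sigma_ok [pb_valid pb_integ] s_good; apply/seteqP; split => r /=.
  by move=> deliv _ p p_ok; case: (deliv p p_ok) => ->.
move=> pb_total.
have pb_all (q : 'I_N) : q \notin Byz -> pbout A r q = Some m.
  move=> q_ok.
  have /pb_total/(_ q q_ok) : exists p, p \notin Byz /\ pbout A r p <> None.
    by exists sigma; rewrite pb_valid.
  by case E_q : (pbout A r q) => [x|] // _; rewrite (pb_integ _ _ _ _ q_ok E_q).
move=> p p_ok; split; first exact: pb_all.
apply: leq_trans (_ : #|[set i | s p i \notin Byz]%SET| <= _)%N.
  by move: (s_good p p_ok); rewrite inE.
apply: subset_leq_card; apply/fintype.subsetP => i; rewrite inE => i_ok.
(* The echo count of [sieve_delivers] ranges over a classical set. *)
by rewrite in_setE /= (negbTE i_ok) pb_all.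
Qed.

Theorem theorem8 (R : realType) (d : measure_display) (Omega : measurableType d)
  (P : probability Omega R) (Adv : Type) (N E Ehat : nat) (Msg : eqType)
  (Byz : {set 'I_N}) (sigma : 'I_N) (m : Msg)
  (pbout : Adv -> Omega -> 'I_N -> option Msg) (eps_t : R) :
  sigma \notin Byz ->
  pb_correct_sender Byz pbout sigma m ->
  (forall A p x, measurable [set r | pbout A r p = x]) ->
  pb_totality P Byz pbout eps_t ->
  forall (strat : sample_t N E -> Adv)
         (becho : sample_t N E -> Omega -> 'I_N -> 'I_N -> bool),
  (forall s b p, measurable [set r | becho s r b p]) ->
  ((1 - eps_v_bound E Ehat Byz eps_t)%:E <=
     sieve_validity_prob P Ehat Byz pbout strat becho m)%E.
Proof.
(* No measurability is needed: on good samples the delivery event is the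
   totality event itself. *)
move=> sigma_ok pb_ok _ pb_total strat becho _.
have N_gt0 : (0 < N)%N := leq_ltn_trans (leq0n sigma) (ltn_ord sigma).
have samples_gt0 : (0 < #|{ffun 'I_E -> 'I_N}|)%N.
  by rewrite card_ffun !card_ord expn_gt0 N_gt0.
have cardC_Byz : #|~: Byz| = (N - #|Byz|)%N by rewrite cardsCs finset.setCK card_ord.
rewrite /eps_v_bound -cardC_Byz one_sub_eps_oE // -ratio_ffun_in_outside //.
have -> : forall x y : R, 1 - (x + (1 - x) * (1 - y)) = (1 - x) * y.
  by move=> x y; ring.
apply: uniform_mean_ge_ratio => s; first exact: measure_ge0.
rewrite inE => /forallP s_good.
rewrite (all_correct_deliver_totality _ _ sigma_ok pb_ok); first exact: pb_total.
by move=> p p_ok; move: (s_good p); rewrite p_ok.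
Qed.
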